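(* There is a function $f:(0,\infty)\to[0,1]$ with $\lim_{r\to\infty}r^{c}f(r)=0$ for every $c>0$ such that the following holds. For every common knowledge distinguishing debate game $(A,S,P,C_w,C_l)$ and all positive integers $m,n$ with $|C_l(s)|\le n$ and $|C_w(s)|\ge m$ for all $s\in S$, there is a policy whose error is at most $f(m/n)$.
   Context: Let $\delta$ be a special default action. A CKDDG is a tuple $(A,S,P,C_w,C_l)$ with $A$ finite, $\delta\notin A$, $S$ finite, $P$ a probability mass function on $S$, and $C_w,C_l:S\to\mathcal P(A)$. A policy is $M:\{1,2\}\times(A\cup\{\delta\})^2\to[0,1]$ with $M(1,a_1,a_2)+M(2,a_1,a_2)=1$. For $j\in\{1,2\}$ and $s\in S$, $w^i_M((j,s))$ is the value to agent $i$ of the zero-sum game with payoff matrix $M(i,\cdot,\cdot)$ in which agent $j$ chooses from $C_w(s)\cup\{\delta\}$ and the other agent chooses from $C_l(s)\cup\{\delta\}$. The error is $\mathbb E_{s\sim P}\left[\frac{w^1_M((2,s))+w^2_M((1,s))}{2}\right]$. *)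

From HB Require Import structures.
From mathcomp Require Import all_boot all_order all_algebra.
From mathcomp Require Import all_classical all_reals all_analysis.
Set Implicit Arguments. Unset Strict Implicit. Unset Printing Implicit Defensive.
Import Order.TTheory GRing.Theory Num.Theory.
Local Open Scope ring_scope.
Local Open Scope classical_set_scope.

Inductive agent := Ag1 | Ag2.
Definition other (i : agent) : agent := if i is Ag1 then Ag2 else Ag1.

Section CKDDG.
Variable R : realType.
Variable A : finType.
(* Actions are [option A]: [None] is the special default action delta,
   [Some a] is the action a in A (so delta is not in A by construction). *)

Definition is_pmf (S : finType) (P : S -> R) : Prop :=
  (forall s, 0 <= P s) /\ \sum_(s : S) P s = 1.

Definition is_policy (M : agent -> option A -> option A -> R) : Prop :=
  (forall i a1 a2, 0 <= M i a1 a2 <= 1) /\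
  (forall a1 a2, M Ag1 a1 a2 + M Ag2 a1 a2 = 1).

Definition mixed (X : {set option A}) (x : option A -> R) : Prop :=
  (forall a, 0 <= x a) /\ (forall a, a \notin X -> x a = 0) /\
  \sum_(a : option A) x a = 1.

Definition payoff (M : agent -> option A -> option A -> R) (i : agent)
  (x1 x2 : option A -> R) : R :=
  \sum_(a1 : option A) \sum_(a2 : option A) x1 a1 * x2 a2 * M i a1 a2.

Definition game_value (M : agent -> option A -> option A -> R) (i : agent)
  (X1 X2 : {set option A}) : R :=
  let Xi := if i is Ag1 then X1 else X2 in
  let Xo := if i is Ag1 then X2 else X1 in
  sup [set v | exists x, mixed Xi x /\
        v = inf [set u | exists y, mixed Xo y /\
              u = (if i is Ag1 then payoff M i x y else payoff M i y x)]].

(* w^i_M((j,s)): agent j chooses from C_w(s) u {delta}, the other agent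
   from C_l(s) u {delta}. *)
Definition wval (S : finType) (Cw Cl : S -> {set A})
  (M : agent -> option A -> option A -> R) (i j : agent) (s : S) : R :=
  let W := (Some @: Cw s) :|: [set None] in
  let L := (Some @: Cl s) :|: [set None] in
  if j is Ag1 then game_value M i W L else game_value M i L W.

Definition error (S : finType) (P : S -> R) (Cw Cl : S -> {set A})
  (M : agent -> option A -> option A -> R) : R :=
  \sum_(s : S) P s * ((wval Cw Cl M Ag1 Ag2 s + wval Cw Cl M Ag2 Ag1 s) / 2).

End CKDDG.

(* Give every action an independent random label: an "active" bit, set with
   probability p, and a row of fair coins.  Active actions beat inactive ones
   and the default action; between actions of equal activity a uniformly
   random tournament built from the coins decides.  In state s both error
   terms vanish as soon as some action of C_w(s) \ C_l(s) is active and beats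
   every active action of C_l(s), since whichever agent holds C_w(s) can play
   it.  Given the labels of C_l(s), k of which are active, each of the at
   least m - n candidates does so independently with probability p 2^-k.
   With p = 1/(n 2^K) and m >= n (16^K + 1), splitting on k <= K bounds the
   failure probability by E[2^(K k)] 2^-(K(K+1)) + (1 - 1/(n 4^K))^(n 16^K)
   <= e 2^-(K(K+1)) + exp(-4^K).  Some labelling does no worse than the
   average, and K = log_16 (m/n - 1) makes the bound decay faster than any
   power of m/n. *)

From HB Require Import structures.
From mathcomp Require Import all_boot all_order all_algebra.
From mathcomp Require Import all_classical all_reals all_analysis.
From mathcomp Require Import lra zify ring.
Set Implicit Arguments. Unset Strict Implicit. Unset Printing Implicit Defensive.
Import Order.TTheory GRing.Theory Num.Theory.
Local Open Scope ring_scope.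
Local Open Scope classical_set_scope.

Lemma not_exists_in_prod (R : comPzRingType) (T : finType) (W : {set T}) (Q : pred T) :
  (~~ [exists a in W, Q a])%:R = \prod_(a in W) (1 - (Q a)%:R) :> R.
Proof.
case: (boolP [exists a in W, Q a]) => [/exists_inP[a aW Qa]|/exists_inPn noQ] /=.
  by rewrite (bigD1 a) //= Qa subrr mul0r.
by rewrite big1 // => a /noQ/negPf ->; rewrite subr0.
Qed.

Lemma exists_le_avg (R : realDomainType) (T : finType) (w f : T -> R) :
  (forall t, 0 <= w t) -> \sum_t w t = 1 -> exists t, f t <= \sum_t w t * f t.
Proof.
move=> w0 w1; have [t0 _|T0] := pickP (fun _ : T => true); last first.
  by move: w1; rewrite big_pred0 // => /eqP; rewrite eq_sym oner_eq0.
have [t _ tmin] := @arg_minP _ _ _ t0 (fun _ => true) f isT.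
exists t; rewrite -[f t]mul1r -w1 mulr_suml.
by apply: ler_sum => u _; rewrite ler_wpM2l ?tmin.
Qed.

Lemma sum_ffun_agree (R : comPzSemiRingType) (T : finType) (S : {set T}) (c : T -> bool) :
  \sum_(h : {ffun T -> bool}) ([forall b in S, h b == c b])%:R = 2 ^+ #|~: S| :> R.
Proof.
pose F b (e : bool) : R := if b \in S then (e == c b)%:R else 1.
transitivity (\sum_(h : {ffun T -> bool}) \prod_b F b (h b)).
  apply: eq_bigr => h _; rewrite /F; case: (boolP [forall b in S, _]).
    by move=> /forall_inP hc; rewrite big1 // => b _; case: ifPn => // /hc ->.
  rewrite negb_forall_in => /exists_inP[b bS /negPf hb].
  by rewrite (bigD1 b) //= bS hb mul0r.
rewrite -bigA_distr_bigA -prodr_const [RHS]big_mkcond; apply: eq_bigr => b _.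
rewrite big_bool /F !inE; case: (b \in S) => /=; last by [].
by case: (c b); rewrite ?addr0 ?add0r.
Qed.

Section GameValue.
Variables (R : realType) (A : finType).
Implicit Types (M : agent -> option A -> option A -> R) (X Y : {set option A}).

Definition pure (a : option A) : option A -> R := fun b => (b == a)%:R.

Lemma pure_mixed X a : a \in X -> mixed X (pure a).
Proof.
move=> aX; split; first by move=> b; rewrite /pure ler0n.
split; first by move=> b; apply: contraNeq; rewrite /pure pnatr_eq0 eqb0 negbK => /eqP ->.
by rewrite (bigD1 a) //= /pure eqxx big1 ?addr0 // => b /negPf ->.
Qed.

Lemma mixed_avg_le X x (g : option A -> R) c :
  mixed X x -> (forall b, b \in X -> g b <= c) -> \sum_b x b * g b <= c.
Proof.
move=> [x0 [xX x1]] gc; rewrite -[c]mul1r -x1 mulr_suml; apply: ler_sum => b _.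
by have [bX|bX] := boolP (b \in X); [rewrite ler_wpM2l ?gc|rewrite xX ?mul0r].
Qed.

Lemma payoff_ge0 M i x y X Y : is_policy M -> mixed X x -> mixed Y y ->
  0 <= payoff M i x y.
Proof.
move=> [M01 _] [x0 _] [y0 _]; apply: sumr_ge0 => a _; apply: sumr_ge0 => b _.
by rewrite !mulr_ge0 //; case/andP: (M01 i a b).
Qed.

Lemma payoff_pure_r M i x a : payoff M i x (pure a) = \sum_b x b * M i b a.
Proof.
apply: eq_bigr => b _; rewrite (bigD1 a) //= /pure eqxx mulr1 big1 ?addr0 //.
by move=> c /negPf ->; rewrite mulr0 mul0r.
Qed.

Lemma payoff_pure_l M i x a : payoff M i (pure a) x = \sum_b x b * M i a b.
Proof.
rewrite /payoff (bigD1 a) //= [X in _ + X]big1 ?addr0; last first.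
  by move=> c /negPf ca; apply: big1 => b _; rewrite /pure ca !mul0r.
by apply: eq_bigr => b _; rewrite /pure eqxx mul1r mulrC.
Qed.

Lemma maxmin_le_pure X Y (F : (option A -> R) -> (option A -> R) -> R) b a c :
  b \in X -> a \in Y -> (forall x y, mixed X x -> mixed Y y -> 0 <= F x y) ->
  (forall x, mixed X x -> F x (pure a) <= c) ->
  sup [set v | exists x, mixed X x /\
         v = inf [set u | exists y, mixed Y y /\ u = F x y]] <= c.
Proof.
move=> bX aY F0 Fc; apply: ge_sup.
  by eexists; exists (pure b); split; [exact: pure_mixed|].

move=> _ [x [mx ->]]; apply: le_trans (Fc x mx).
apply: ge_inf; last by exists (pure a); split; [exact: pure_mixed|].
by exists 0 => _ [y [my ->]]; exact: F0.
Qed.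

Lemma game_value1_le M X1 X2 b a c : is_policy M -> b \in X1 -> a \in X2 ->
  (forall b', b' \in X1 -> M Ag1 b' a <= c) -> game_value M Ag1 X1 X2 <= c.
Proof.
move=> HM bX aX Mc; apply: (maxmin_le_pure bX aX) => [x y mx my|x mx].
  exact: payoff_ge0 HM mx my.
by rewrite payoff_pure_r; exact: mixed_avg_le mx Mc.
Qed.

Lemma game_value2_le M X1 X2 b a c : is_policy M -> b \in X2 -> a \in X1 ->
  (forall b', b' \in X2 -> M Ag2 a b' <= c) -> game_value M Ag2 X1 X2 <= c.
Proof.
move=> HM bX aX Mc; apply: (maxmin_le_pure bX aX) => [x y mx my|x mx].
  exact: payoff_ge0 HM my mx.
by rewrite payoff_pure_l; exact: mixed_avg_le mx Mc.
Qed.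

Lemma game_value_le1 M i X1 X2 : is_policy M -> None \in X1 -> None \in X2 ->
  game_value M i X1 X2 <= 1.
Proof.
move=> HM n1 n2; have M1 i' a b : M i' a b <= 1 by case/andP: (HM.1 i' a b).
by case: i; [apply: (game_value1_le HM n1 n2) | apply: (game_value2_le HM n2 n1)].
Qed.

End GameValue.

Section ProductMass.
Variables (R : comPzSemiRingType) (I X : finType) (mu : X -> R).

Definition prod_mass (d : {ffun I -> X}) : R := \prod_i mu (d i).

Definition fupd (d : {ffun I -> X}) (a : I) (x : X) : {ffun I -> X} :=
  [ffun i => if i == a then x else d i].

Lemma fupd_eq d a x : fupd d a x a = x.
Proof. by rewrite ffunE eqxx. Qed.

Lemma fupd_neq d a x i : i != a -> fupd d a x i = d i.
Proof. by rewrite ffunE => /negPf ->. Qed.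

Lemma fupdK d a x : fupd (fupd d a x) a (d a) = d.
Proof. by apply/ffunP => i; rewrite !ffunE; case: eqP => // ->. Qed.

Lemma prod_mass_fupd d a x :
  prod_mass (fupd d a x) * mu (d a) = prod_mass d * mu x.
Proof.
rewrite /prod_mass (bigD1 a) //= [in RHS](bigD1 a) //= fupd_eq.
rewrite (eq_bigr (fun i => mu (d i))); last by move=> i ia; rewrite fupd_neq.
by rewrite mulrAC [RHS]mulrAC [mu (d a) * _]mulrC.
Qed.

Lemma sum_prod_mass_prod (F : I -> X -> R) :
  \sum_d prod_mass d * \prod_i F i (d i) = \prod_i \sum_x mu x * F i x.
Proof. by rewrite bigA_distr_bigA; apply: eq_bigr => d _; rewrite -big_split. Qed.

Hypothesis mu_sum1 : \sum_x mu x = 1.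

Lemma sum_prod_mass : \sum_d prod_mass d = 1.
Proof.
transitivity (\prod_(i : I) \sum_x mu x * 1).
  rewrite -(sum_prod_mass_prod (fun _ _ => 1)).
  by apply: eq_bigr => d _; rewrite big1_eq mulr1.
by rewrite big1 // => i _; under eq_bigr do rewrite mulr1.
Qed.

Lemma sum_prod_mass_resample a (H : {ffun I -> X} -> R) :
  \sum_d prod_mass d * H d = \sum_d prod_mass d * \sum_x mu x * H (fupd d a x).
Proof.
transitivity (\sum_d \sum_x prod_mass d * mu x * H d).
  apply: eq_bigr => d _; rewrite -[LHS]mulr1 -mu_sum1 mulr_sumr.
  by apply: eq_bigr => x _; rewrite mulrAC.
transitivity (\sum_d \sum_x prod_mass d * mu x * H (fupd d a x)); last first.
  by apply: eq_bigr => d _; rewrite mulr_sumr; apply: eq_bigr => x _; rewrite mulrA.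
rewrite !pair_bigA /=.
pose swap (p : {ffun I -> X} * X) := (fupd p.1 a p.2, p.1 a).
have swapK : involutive swap by case=> d x; rewrite /swap /= fupdK fupd_eq.
rewrite (reindex_inj (inv_inj swapK)) /=.
by apply: eq_bigr => -[d x] _ /=; rewrite prod_mass_fupd.
Qed.

Lemma sum_prod_mass_indep_seq (s : seq I) (phi : I -> X -> {ffun I -> X} -> R)
    (g : {ffun I -> X} -> R) : uniq s ->
  (forall a b x y d, b \in s -> phi a y (fupd d b x) = phi a y d) ->
  (forall b x d, b \in s -> g (fupd d b x) = g d) ->
  \sum_d prod_mass d * (g d * \prod_(a <- s) phi a (d a) d) =
  \sum_d prod_mass d * (g d * \prod_(a <- s) \sum_x mu x * phi a x d).
Proof.
elim: s g => [|a s IH] g; first by move=> *; apply: eq_bigr => d _; rewrite !big_nil.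
rewrite cons_uniq => /andP[a_s s_uniq] phi_inv g_inv.
have phi_inv_s a' b x y d : b \in s -> phi a' y (fupd d b x) = phi a' y d.
  by move=> bs; apply: phi_inv; rewrite inE bs orbT.
pose h d := g d * phi a (d a) d.
transitivity (\sum_d prod_mass d * (h d * \prod_(b <- s) \sum_x mu x * phi b x d)).
  rewrite -(IH h s_uniq phi_inv_s).
    by apply: eq_bigr => d _; rewrite big_cons [g d * _]mulrA.
  move=> b x d bs; rewrite /h g_inv ?inE ?bs ?orbT // phi_inv_s // fupd_neq //.
  by apply: contraNneq a_s => ->.
rewrite (sum_prod_mass_resample a); apply: eq_bigr => d _; congr (_ * _).
rewrite big_cons mulrA mulr_sumr mulr_suml; apply: eq_bigr => x _.
have Q_inv : \prod_(b <- s) \sum_y mu y * phi b y (fupd d a x) =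
             \prod_(b <- s) \sum_y mu y * phi b y d.
  by apply: eq_bigr => b _; apply: eq_bigr => y _; rewrite phi_inv ?mem_head.
rewrite /h g_inv ?mem_head // fupd_eq phi_inv ?mem_head // Q_inv.
by rewrite !mulrA [mu x * g d]mulrC.
Qed.

Lemma sum_prod_mass_indep (W : {set I}) (phi : I -> X -> {ffun I -> X} -> R) :
  (forall a b x y d, b \in W -> phi a y (fupd d b x) = phi a y d) ->
  \sum_d prod_mass d * \prod_(a in W) phi a (d a) d =
  \sum_d prod_mass d * \prod_(a in W) \sum_x mu x * phi a x d.
Proof.
move=> phi_inv.
transitivity (\sum_d prod_mass d * (1 * \prod_(a <- enum W) phi a (d a) d)).
  by apply: eq_bigr => d _; rewrite mul1r big_enum.
rewrite (@sum_prod_mass_indep_seq (enum W) phi (fun _ => 1)) ?enum_uniq //.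
- by apply: eq_bigr => d _; rewrite mul1r big_enum.
- by move=> a b x y d; rewrite mem_enum; exact: phi_inv.
Qed.

End ProductMass.

Section RandomLabels.
Variables (R : numFieldType) (A : finType) (p : R).

Definition label := (bool * {ffun A -> bool})%type.

Definition label_mass (x : label) : R := (if x.1 then p else 1 - p) / 2 ^+ #|A|.

Lemma sum_label (F : label -> R) :
  \sum_x F x = \sum_e \sum_(h : {ffun A -> bool}) F (e, h).
Proof. by rewrite pair_bigA; apply: eq_bigr => -[]. Qed.

Lemma sum_label_mass_fst (F : bool -> R) :
  \sum_x label_mass x * F x.1 = p * F true + (1 - p) * F false.
Proof.
have avg (c : R) : \sum_(h : {ffun A -> bool}) c / 2 ^+ #|A| = c.
  rewrite sumr_const card_ffun card_bool -[_ *+ (2 ^ _)]mulr_natr natrX divfK //.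
by rewrite sum_label big_bool /label_mass /= ![_ / _ * _]mulrAC !avg.
Qed.

Lemma sum_label_mass : \sum_x label_mass x = 1.
Proof.
have := sum_label_mass_fst (fun _ => 1); rewrite !mulr1 addrC subrK => <-.
by apply: eq_bigr => x _; rewrite mulr1.
Qed.

Lemma label_mass_ge0 x : 0 <= p <= 1 -> 0 <= label_mass x.
Proof.
by case/andP=> p0 p1; rewrite divr_ge0 ?exprn_ge0 //; case: x.1; rewrite ?subr_ge0.
Qed.

(* The xor with the rank order makes this antisymmetric; for a fixed label of
   [b], the outcome of [a] against [b] is the fair coin [xa.2 b]. *)
Definition coin_beats (a b : A) (xa xb : label) : bool :=
  xa.2 b (+) xb.2 a (+) (enum_rank a < enum_rank b)%N.

Lemma coin_beats_anti a b xa xb :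
  a != b -> coin_beats b a xb xa = ~~ coin_beats a b xa xb.
Proof.
move=> ab; have : enum_rank a != enum_rank b by rewrite (inj_eq enum_rank_inj).
rewrite -(inj_eq val_inj) /coin_beats /=.
by case: ltngtP => // _ _; case: (xa.2 b); case: (xb.2 a).
Qed.

Definition active (L : {set A}) (d : {ffun A -> label}) : {set A} :=
  [set b in L | (d b).1].

Definition dominates (L : {set A}) (a : A) (x : label) (d : {ffun A -> label}) : bool :=
  x.1 && [forall b in active L d, coin_beats a b x (d b)].

Lemma sum_dominates (L : {set A}) a d :
  \sum_x label_mass x * (dominates L a x d)%:R = p / 2 ^+ #|active L d|.
Proof.
rewrite sum_label big_bool /label_mass /dominates /=.
rewrite [X in _ + X]big1 ?addr0; last by move=> h _; rewrite mulr0.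
pose c b := ~~ ((d b).2 a (+) (enum_rank a < enum_rank b)%N).
rewrite -mulr_sumr (eq_bigr (fun h : {ffun A -> bool} =>
  ([forall b in active L d, h b == c b])%:R)).
  by rewrite sum_ffun_agree -(cardsC (active L d)) exprD invfM mulrA divfK.
move=> h _; congr ((nat_of_bool _)%:R); apply: eq_forallb_in => b _.
by rewrite /coin_beats /c /=; case: (h b); case: ((d b).2 a); case: (_ < _)%N.
Qed.

Lemma dominates_fupd (L : {set A}) a y d b x :
  b \notin L -> dominates L a y (fupd d b x) = dominates L a y d.
Proof.
move=> bL; have fupd_L b' : b' \in L -> fupd d b x b' = d b'.
  by move=> b'L; rewrite fupd_neq //; apply: contraNneq bL => <-.
have active_fupd : active L (fupd d b x) = active L d.
  by apply/setP => b'; rewrite !inE; case: (boolP (b' \in L)) => // /fupd_L ->.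
rewrite /dominates active_fupd; congr (_ && _); apply: eq_forallb_in => b'.
by rewrite inE => /andP[b'L _]; rewrite fupd_L.
Qed.

Definition has_dominator (L W : {set A}) (d : {ffun A -> label}) : bool :=
  [exists a in W :\: L, dominates L a (d a) d].

Lemma sum_prod_mass_no_dominator (L W : {set A}) :
  \sum_d prod_mass label_mass d * (~~ has_dominator L W d)%:R =
  \sum_d prod_mass label_mass d * (1 - p / 2 ^+ #|active L d|) ^+ #|W :\: L|.
Proof.
under eq_bigr do rewrite not_exists_in_prod.
rewrite (@sum_prod_mass_indep _ _ _ label_mass sum_label_mass (W :\: L)
  (fun a x d => 1 - (dominates L a x d)%:R)); last first.
  by move=> a b x y d; rewrite inE => /andP[bL _]; rewrite dominates_fupd.
apply: eq_bigr => d _; rewrite -prodr_const; congr (_ * _); apply: eq_bigr => a _.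
under eq_bigr do rewrite mulrBr mulr1.
by rewrite sumrB sum_label_mass sum_dominates.
Qed.

Lemma sum_prod_mass_pow_active (L : {set A}) (t : R) :
  \sum_d prod_mass label_mass d * t ^+ #|active L d| = (1 - p + p * t) ^+ #|L|.
Proof.
pose F b (x : label) := if (b \in L) && x.1 then t else 1.
have E d : t ^+ #|active L d| = \prod_b F b (d b).
  by rewrite -prodr_const big_mkcond; apply: eq_bigr => b _; rewrite /F inE.
under eq_bigr do rewrite E.
rewrite sum_prod_mass_prod -prodr_const [RHS]big_mkcond; apply: eq_bigr => b _.
rewrite /F (sum_label_mass_fst (fun e => if (b \in L) && e then t else 1)).
by case: (b \in L); rewrite /= !mulr1 ?subrKC // addrC.
Qed.

End RandomLabels.

Section TournamentPolicy.
Variables (R : realType) (A : finType).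
Implicit Types (d : {ffun A -> label A}) (L W : {set A}).

Definition beats d (a b : A) : bool :=
  if (d a).1 != (d b).1 then (d a).1 else coin_beats a b (d a) (d b).

Definition opt_beats d (x y : option A) : bool :=
  match x, y with
  | Some a, Some b => beats d a b
  | Some a, None => (d a).1
  | None, Some b => ~~ (d b).1
  | None, None => true
  end.

Definition tournament_policy d : agent -> option A -> option A -> R :=
  fun i x y => if i is Ag1 then (opt_beats d x y)%:R else 1 - (opt_beats d x y)%:R.

Lemma tournament_is_policy d : is_policy (tournament_policy d).
Proof.
split=> [i x y|x y] /=; last by rewrite addrC subrK.
have b01 (b : bool) : 0 <= (b%:R : R) <= 1 by case: b; rewrite ?lexx ?ler01.
by case: i => /=; [exact: b01 | have := b01 (opt_beats d x y); lra].
Qed.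

Lemma dominates_beats L a b d : a \notin L -> dominates L a (d a) d -> b \in L ->
  beats d a b && ~~ beats d b a.
Proof.
move=> aL /andP[act_a /forall_inP dom] bL; have ab : a != b by apply: contraNneq aL => ->.
rewrite /beats act_a; case: (boolP (d b).1) => [act_b|//] /=.
by rewrite (coin_beats_anti (d a) (d b) ab) negbK andbb; apply: dom; rewrite inE bL.
Qed.

Lemma mem_optset L b : (Some b \in Some @: L :|: [set None]) = (b \in L).
Proof. by rewrite !inE orbF (mem_imset _ _ Some_inj). Qed.

Lemma None_optset L : None \in Some @: L :|: [set None].
Proof. by rewrite !inE eqxx orbT. Qed.

Lemma dominates_game_values_le0 W L a d : a \in W -> a \notin L ->
  dominates L a (d a) d ->
  game_value (tournament_policy d) Ag1
    (Some @: L :|: [set None]) (Some @: W :|: [set None]) <= 0 /\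
  game_value (tournament_policy d) Ag2
    (Some @: W :|: [set None]) (Some @: L :|: [set None]) <= 0.
Proof.
move=> aW aL dom; have act_a : (d a).1 by case/andP: dom.
have HM := tournament_is_policy d.
have aW' : Some a \in Some @: W :|: [set None] by rewrite mem_optset.
split.
- apply: (game_value1_le HM (None_optset L) aW') => -[b|] /=; last by rewrite act_a.
  by rewrite mem_optset => bL; case/andP: (dominates_beats aL dom bL) => _ /negPf ->.
- apply: (game_value2_le HM (None_optset L) aW') => -[b|] /=; last by rewrite act_a subrr.
  rewrite mem_optset => bL.
  by case/andP: (dominates_beats aL dom bL) => -> _; rewrite subrr.
Qed.

End TournamentPolicy.

Section Error.
Variables (R : realType) (A S : finType) (P : S -> R) (Cw Cl : S -> {set A}).
Hypothesis P_pmf : is_pmf P.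
Implicit Type M : agent -> option A -> option A -> R.

Lemma wval_le1 M i j s : is_policy M -> wval Cw Cl M i j s <= 1.
Proof. by move=> HM; case: j; apply: game_value_le1; rewrite // !inE eqxx orbT. Qed.

Lemma error_le1 M : is_policy M -> error P Cw Cl M <= 1.
Proof.
move=> HM; case: P_pmf => P0 P1; rewrite -P1; apply: ler_sum => s _.
rewrite ler_piMr //; have := wval_le1 Ag1 Ag2 s HM; have := wval_le1 Ag2 Ag1 s HM.
lra.
Qed.

Lemma error_tournament_le d :
  error P Cw Cl (tournament_policy R d) <=
  \sum_s P s * (~~ has_dominator (Cl s) (Cw s) d)%:R.
Proof.
case: P_pmf => P0 _; apply: ler_sum => s _; apply: ler_wpM2l => //.
have HM := tournament_is_policy R d.
have := wval_le1 Ag1 Ag2 s HM; have := wval_le1 Ag2 Ag1 s HM; rewrite /wval /=.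
case: (boolP (has_dominator _ _ d)) => [/exists_inP[a aWL dom]|_] /= w21 w12; last lra.
move: aWL; rewrite inE => /andP[aL aW].
by have [] := dominates_game_values_le0 R aW aL dom; lra.
Qed.

End Error.

Section DecayBounds.
Variable R : realType.

Definition decay (K : nat) : R := (expR 1 + 1) / 2 ^+ (K * K.+1).

Lemma pow_one_add_le_expR (q : R) (n l : nat) : (0 < n)%N -> 0 <= q <= n%:R^-1 ->
  (l <= n)%N -> (1 + q) ^+ l <= expR 1.
Proof.
move=> n0 /andP[q0 qn] ln; have n0' : (0 : R) < n%:R by rewrite ltr0n.
apply: (@le_trans _ _ ((1 + q) ^+ n)); first by rewrite ler_weXn2l // lerDl.
apply: (@le_trans _ _ (expR q ^+ n)).
  by rewrite lerXn2r ?nnegrE ?expR_ge1Dx ?addr_ge0.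
by rewrite -expRM_natl ler_expR -[leRHS](mulfV (lt0r_neq0 n0')) ler_pM2l.
Qed.

Lemma pow_one_sub_le_expR (q : R) (w : nat) : 0 <= q <= 1 ->
  (1 - q) ^+ w <= expR (- (w%:R * q)).
Proof.
case/andP=> q0 q1; rewrite -mulrN expRM_natl lerXn2r ?nnegrE ?subr_ge0 ?expR_ge0 //.
by have := expR_ge1Dx (- q); rewrite addrC.
Qed.

Lemma exp2_le_expR (j : nat) : 2 ^+ j <= expR j%:R :> R.
Proof.
rewrite -[j%:R]mulr1 expRM_natl lerXn2r ?nnegrE ?expR_ge0 //.
by have := @expR_ge1Dx R 1.
Qed.

Lemma mul_succ_le_exp4 (K : nat) : (K * K.+1 <= 4 ^ K)%N.
Proof.
suff: (K * K.+1 <= 4 ^ K)%N /\ (2 * K.+1 <= 3 * 4 ^ K)%N by case.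
elim: K => // K [IH1 IH2]; rewrite expnS; lia.
Qed.

Lemma pow_one_sub_le_split (p : R) (k K w : nat) : 0 <= p <= 1 ->
  (1 - p / 2 ^+ k) ^+ w <= (2 ^+ K) ^+ k / (2 ^+ K) ^+ K.+1 + (1 - p / 2 ^+ K) ^+ w.
Proof.
case/andP=> p0 p1; have e2 j : 1 <= (2 : R) ^+ j by rewrite exprn_ege1 // ler1n.
have q01 j : 0 <= 1 - p / 2 ^+ j <= 1.
  rewrite gerBl subr_ge0 divr_ge0 ?exprn_ge0 // andbT.
  by rewrite ler_pdivrMr ?exprn_gt0 //; have := e2 j; lra.
case: (ltnP K k) => Kk.
- apply: ler_wpDr; first by case/andP: (q01 K) => q0 _; rewrite exprn_ge0.
  apply: (@le_trans _ _ 1); first by case/andP: (q01 k) => q0 q1; rewrite exprn_ile1.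
  by rewrite ler_pdivlMr ?exprn_gt0 // mul1r ler_weXn2l // e2.
- apply: ler_wpDl; first by rewrite divr_ge0 ?exprn_ge0.
  apply: lerXn2r; rewrite ?nnegrE; [by case/andP: (q01 k) | by case/andP: (q01 K) |].
  rewrite lerD2l lerN2 ler_wpM2l // lef_pV2 ?posrE ?exprn_gt0 //.
  by rewrite ler_weXn2l // ler1n.
Qed.

End DecayBounds.

Section TournamentBound.
Variables (R : realType) (A : finType) (n K : nat).
Hypothesis n_gt0 : (0 < n)%N.

Let p : R := (n%:R * 2 ^+ K)^-1.

Let exp2K_ge1 : 1 <= (2 : R) ^+ K.
Proof. by rewrite exprn_ege1 // ler1n. Qed.

Let p_gt0 : 0 < p.
Proof. by rewrite invr_gt0 mulr_gt0 ?ltr0n ?exprn_gt0. Qed.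

Let p2K : p * 2 ^+ K = n%:R^-1.
Proof. by rewrite /p invfM -mulrA mulVf ?mulr1 // expf_neq0 ?pnatr_eq0. Qed.

Let p_le1 : p <= 1.
Proof.
rewrite invf_le1 ?mulr_gt0 ?ltr0n ?exprn_gt0 //.
by rewrite mulr_ege1 ?ler1n.
Qed.

Lemma active_term_le (l : nat) : (l <= n)%N ->
  (1 - p + p * 2 ^+ K) ^+ l / (2 ^+ K) ^+ K.+1 <= expR 1 / 2 ^+ (K * K.+1).
Proof.
move=> ln; rewrite exprM ler_wpM2r ?invr_ge0 ?exprn_ge0 //.
have -> : 1 - p + p * 2 ^+ K = 1 + (p * 2 ^+ K - p) by ring.
apply: pow_one_add_le_expR n_gt0 _ ln; rewrite subr_ge0 -p2K gerBl.
by rewrite (ltW p_gt0) andbT ler_peMr ?(ltW p_gt0).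
Qed.

Lemma inactive_term_le (w : nat) : (n * 16 ^ K <= w)%N ->
  (1 - p / 2 ^+ K) ^+ w <= (2 ^+ (K * K.+1))^-1.
Proof.
move=> nw; have q_gt0 : 0 < p / 2 ^+ K by rewrite divr_gt0 ?exprn_gt0.
have q_le1 : p / 2 ^+ K <= 1.
  by rewrite ler_pdivrMr ?exprn_gt0 // mul1r (le_trans p_le1 exp2K_ge1).
apply: le_trans (pow_one_sub_le_expR _ _) _; first by rewrite ltW.
have nq : (n * 16 ^ K)%:R * (p / 2 ^+ K) = (4 ^ K)%:R.
  have -> : (n * 16 ^ K = n * 4 ^ K * 2 ^ K * 2 ^ K)%N by rewrite -!mulnA -!expnMn.
  by rewrite /p !natrM !natrX; field; rewrite expf_neq0 ?pnatr_eq0 -?lt0n.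
apply: (@le_trans _ _ (expR (4 ^ K)%:R)^-1).
  by rewrite -expRN ler_expR lerN2 -nq ler_pM2r // ler_nat.
rewrite lef_pV2 ?posrE ?expR_gt0 ?exprn_gt0 //.
apply: (@le_trans _ _ (2 ^+ (4 ^ K))); last exact: exp2_le_expR.
by rewrite ler_weXn2l ?ler1n ?mul_succ_le_exp4.
Qed.

Lemma no_dominator_prob_le (L W : {set A}) : (#|L| <= n)%N ->
  (n * 16 ^ K <= #|W :\: L|)%N ->
  \sum_d prod_mass (label_mass p) d * (~~ has_dominator L W d)%:R <= decay R K.
Proof.
move=> Ln nW; have p01 : 0 <= p <= 1 by rewrite (ltW p_gt0) p_le1.
rewrite sum_prod_mass_no_dominator.
set b := (1 - p / 2 ^+ K) ^+ #|W :\: L|.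
apply: (@le_trans _ _ (\sum_d prod_mass (label_mass p) d *
    ((2 ^+ K) ^+ #|active L d| / (2 ^+ K) ^+ K.+1 + b))).
  apply: ler_sum => d _; rewrite ler_wpM2l ?pow_one_sub_le_split //.
  by apply: prodr_ge0 => a _; exact: label_mass_ge0.
under eq_bigr do rewrite mulrDr mulrA.
rewrite big_split -!mulr_suml sum_prod_mass ?sum_label_mass // mul1r.
rewrite sum_prod_mass_pow_active /decay mulrDl div1r.
exact: lerD (active_term_le Ln) (inactive_term_le nW).
Qed.

Lemma exists_tournament_error_le (S : finType) (P : S -> R) (Cw Cl : S -> {set A})
    (m : nat) :
  is_pmf P -> (forall s, #|Cl s| <= n)%N -> (forall s, m <= #|Cw s|)%N ->
  (n * (16 ^ K + 1) <= m)%N ->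
  exists d, error P Cw Cl (tournament_policy R d) <= decay R K.
Proof.
move=> P_pmf Cl_le Cw_ge nm; have [P0 P1] := P_pmf.
have mass_ge0 (d : {ffun A -> label A}) : 0 <= prod_mass (label_mass p) d.
  by apply: prodr_ge0 => a _; rewrite label_mass_ge0 // (ltW p_gt0) p_le1.
have [d le_avg] := exists_le_avg (fun d => error P Cw Cl (tournament_policy R d))
  mass_ge0 (sum_prod_mass A (sum_label_mass A p)).
exists d; apply: (le_trans le_avg).
apply: (@le_trans _ _ (\sum_d prod_mass (label_mass p) d *
    \sum_s P s * (~~ has_dominator (Cl s) (Cw s) d)%:R)).
  by apply: ler_sum => d' _; rewrite ler_wpM2l ?error_tournament_le.
under eq_bigr do rewrite mulr_sumr; rewrite exchange_big /=.
apply: (@le_trans _ _ (\sum_s P s * decay R K)); last by rewrite -mulr_suml P1 mul1r.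
apply: ler_sum => s _.
under eq_bigr do rewrite mulrCA; rewrite -mulr_sumr ler_wpM2l //.
apply: no_dominator_prob_le => //; rewrite cardsD.
have := subset_leq_card (subsetIr (Cw s) (Cl s)); have := Cl_le s; have := Cw_ge s.
lia.
Qed.

End TournamentBound.

Section ErrorBound.
Import numFieldNormedType.Exports.
Variable R : realType.

Definition decay_index (r : R) : nat := trunc_log 16 (Num.truncn (r - 1)).

Definition error_bound (r : R) : R := Num.min 1 (decay R (decay_index r)).

Lemma decay_ge0 K : 0 <= decay R K.
Proof. by rewrite divr_ge0 ?exprn_ge0 // addr_ge0 ?expR_ge0. Qed.

Lemma error_bound_ge0 r : 0 <= error_bound r.
Proof. by rewrite le_min ler01 decay_ge0. Qed.

Lemma error_bound_le1 r : error_bound r <= 1.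
Proof. by rewrite ge_min lexx. Qed.

Lemma decay_index_gt0 r : (0 < decay_index r)%N -> (16 ^ decay_index r)%:R + 1 <= r.
Proof.
rewrite /decay_index; set t := Num.truncn (r - 1) => K_gt0.
have t_gt0 : (0 < t)%N by move: K_gt0; rewrite trunc_log_gt0 /=; lia.
have r1 : 0 <= r - 1 by move: t_gt0; rewrite truncn_gt0 => /(le_trans ler01).
have := trunc_logP (isT : (1 < 16)%N) t_gt0; rewrite truncn_ge_nat //.
by move=> h; lra.
Qed.

Lemma le_exp2_decay_index r : r <= 2 ^+ (5 * (decay_index r).+1).
Proof.
rewrite /decay_index; set t := Num.truncn (r - 1); set K := trunc_log 16 t.
have t_lt : (t < 16 ^ K.+1)%N by exact: trunc_log_ltn.
have h16 : (16 ^ K.+1 + 1 <= 2 ^ (5 * K.+1))%N.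
  have -> : (2 ^ (5 * K.+1) = 16 ^ K.+1 * 2 ^ K.+1)%N.
    by rewrite -[16%N]/(2 ^ 4)%N -expnM -expnD; congr (expn 2 _); lia.
  have : (2 <= 2 ^ K.+1)%N by rewrite -{1}(expn1 2) leq_exp2l.
  have : (0 < 16 ^ K.+1)%N by rewrite expn_gt0.
  nia.
have := truncnS_gt (r - 1); rewrite -/t -natrX => rt.
have : (t.+1 + 1 <= 2 ^ (5 * K.+1))%N by apply: leq_trans h16; rewrite leq_add2r.
rewrite -(ler_nat R) natrD; lra.
Qed.

Lemma decay_index_cvg : decay_index r @[r --> +oo] --> \oo.
Proof.
apply/cvgnyPge => N; near=> r; apply: trunc_log_max => //.
have r_ge : (16 ^ N)%:R + 1 <= r by near: r; apply: nbhs_pinfty_ge; rewrite num_real.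
by rewrite truncn_ge_nat; have := ler0n R (16 ^ N); lra.
Unshelve. all: by end_near.
Qed.

Lemma decay_pow_cvg (B : R) : 0 <= B -> (B ^+ K.+1 * decay R K) @[K --> \oo] --> 0.
Proof.
move=> B0; have e1 : 0 <= expR 1 + 1 :> R by rewrite addr_ge0 ?expR_ge0.
have bound K : B <= 2 ^+ K ->
    B ^+ K.+1 * decay R K <= geometric ((expR 1 + 1) * B) 2^-1 K.
  move=> BK; have K0 : 0 < (2 : R) ^+ K by rewrite exprn_gt0.
  pose q := B / 2 ^+ K; have q0 : 0 <= q by exact: divr_ge0 B0 (ltW K0).
  have q1 : q <= 1 by rewrite ler_pdivrMr // mul1r.
  have -> : B ^+ K.+1 * decay R K = (expR 1 + 1) * q ^+ K.+1.
    by rewrite /decay exprM expr_div_n mulrA [_ * (expR 1 + 1)]mulrC -mulrA.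
  rewrite /= exprVn -mulrA -/q; apply: (ler_wpM2l e1).
  by rewrite exprS ler_piMr // exprn_ile1.
apply: (@squeeze_cvgr _ _ _ _ (fun=> 0) (geometric ((expR 1 + 1) * B) 2^-1)).
- near=> K; rewrite mulr_ge0 ?exprn_ge0 ?decay_ge0 //= bound //.
  apply: (@le_trans _ _ K%:R); first by near: K; exact: nbhs_infty_ger.
  by rewrite -natrX ler_nat ltnW // ltn_expl.
- exact: (@cvg_cst _ (0 : R)).
- by apply: cvg_geometric; rewrite gtr0_norm ?invf_lt1 ?ltr1n.
Unshelve. all: by end_near.
Qed.

Lemma powR_le_decay_index (c r : R) : 0 <= c -> 0 <= r ->
  r `^ c <= (2 `^ (5 * c)) ^+ (decay_index r).+1.
Proof.
move=> c0 r0; set N := (5 * (decay_index r).+1)%N.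
apply: (@le_trans _ _ ((2 ^+ N) `^ c)).
  by apply: ge0_ler_powR; rewrite ?nnegrE ?exprn_ge0 ?le_exp2_decay_index.
rewrite -powR_mulrn // -[in leRHS]powR_mulrn ?powR_ge0 // -!powRrM.
by rewrite /N natrM mulrAC.
Qed.

Lemma error_bound_cvg (c : R) : 0 < c -> (r `^ c * error_bound r) @[r --> +oo] --> 0.
Proof.
move=> c0; pose B := 2 `^ (5 * c).
apply: (@squeeze_cvgr _ _ _ _ (fun=> 0)
  (fun r => B ^+ (decay_index r).+1 * decay R (decay_index r))).
- near=> r; have r0 : 0 <= r by near: r; apply: nbhs_pinfty_ge; rewrite num_real.
  rewrite mulr_ge0 ?powR_ge0 ?error_bound_ge0 //=.
  rewrite ler_pM ?powR_ge0 ?error_bound_ge0 ?powR_le_decay_index ?(ltW c0) //.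
  by rewrite /error_bound ge_min lexx orbT.
- exact: (@cvg_cst _ (0 : R)).
- exact: (cvg_comp _ _ decay_index_cvg (decay_pow_cvg (powR_ge0 2 (5 * c)))).
Unshelve. all: by end_near.
Qed.

End ErrorBound.

Theorem corollary5p2 (R : realType) :
  exists f : R -> R,
    (forall r : R, 0 < r -> 0 <= f r <= 1) /\
    (forall c : R, 0 < c -> (r `^ c * f r) @[r --> +oo] --> 0) /\
    (forall (A S : finType) (P : S -> R) (Cw Cl : S -> {set A}) (m n : nat),
        is_pmf P -> (0 < m)%N -> (0 < n)%N ->
        (forall s, #|Cl s| <= n)%N -> (forall s, m <= #|Cw s|)%N ->
        exists M : agent -> option A -> option A -> R,
          is_policy M /\ error P Cw Cl M <= f (m%:R / n%:R)).
Proof.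
exists (@error_bound R); split.
  by move=> r _; rewrite error_bound_ge0 error_bound_le1.
split; first exact: error_bound_cvg.
move=> A S P Cw Cl m n P_pmf _ n_gt0 Cl_le Cw_ge.
set K := decay_index (m%:R / n%:R : R).
have [d err_le] : exists d, error P Cw Cl (tournament_policy R d) <= decay R K.
  have [K0|K_gt0] := posnP K.
    exists [ffun=> (false, [ffun=> false])].
    apply: le_trans (error_le1 Cw Cl P_pmf (tournament_is_policy R _)) _.
    by rewrite K0 /decay expr0 divr1 lerDr expR_ge0.
  apply: (@exists_tournament_error_le R A n K n_gt0 S P Cw Cl m) => //.
  move: (decay_index_gt0 K_gt0); rewrite -/K ler_pdivlMr ?ltr0n //.
  by rewrite -(@ler_nat R) natrM natrD mulrC.
exists (tournament_policy R d); split; first exact: tournament_is_policy.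
by rewrite le_min err_le andbT (error_le1 Cw Cl P_pmf (tournament_is_policy R d)).
Qed.
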